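(* Let $\Omega$ be a countably infinite set and $S=\mathrm{Sym}(\Omega)$. The countable subgroups of $S$ form an equivalence class under $\approx$, and every countable subgroup $G$ satisfies $G\prec S_{(A)}$ for every partition $A$ of $\Omega$ having a common finite bound on the cardinalities of its members and infinitely many members of cardinality $>1$. Moreover, for a subgroup $G\le S$ the following are equivalent: (i) $G$ is countable and closed; (ii) there exists a finite subset $\Gamma\subseteq\Omega$ such that $G_{(\Gamma)}=\{1\}$; (iii) $G$ is discrete.
   Context: $\mathrm{Sym}(\Omega)$ is the group of all permutations of $\Omega$ (acting on the right). $S$ carries the function topology (pointwise convergence, $\Omega$ discrete); ''closed'' and ''discrete'' refer to this topology (discrete meaning discrete in the subspace topology). For a partition $A$ of $\Omega$, $S_{(A)}=\{f\in S:\Sigma f=\Sigma\text{ for all }\Sigma\in A\}$. $G_{(\Gamma)}$ denotes the pointwise stabilizer of $\Gamma$ in $G$. For subgroups $G_1,G_2\le S$: $G_1\preccurlyeq G_2$ means there is a finite $U\subseteq S$ with $G_1\le\langle G_2\cup U\rangle$; $G_1\approx G_2$ means both $G_1\preccurlyeq G_2$ and $G_2\preccurlyeq G_1$; $G_1\prec G_2$ means $G_1\preccurlyeq G_2$ and not $G_2\preccurlyeq G_1$. *)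

From mathcomp Require Import all_boot.
From mathcomp Require Import boolp classical_sets cardinality.
Set Implicit Arguments. Unset Strict Implicit. Unset Printing Implicit Defensive.
Local Open Scope classical_set_scope.

(* Sym(Omega): all bijections of T (elements are functions T -> T; the group
   law is composition, identity is id). *)
Definition Sym (T : Type) : set (T -> T) := [set f | bijective f].
Arguments Sym T : clear implicits.

Definition subgroup (T : Type) (G : set (T -> T)) : Prop :=
  [/\ G `<=` Sym T, G id,
      (forall f g, G f -> G g -> G (f \o g))
    & (forall f, G f -> exists g, [/\ G g, cancel f g & cancel g f])].

Inductive gen (T : Type) (X : set (T -> T)) : (T -> T) -> Prop :=
| gen_base f : X f -> gen X f
| gen_id : gen X id
| gen_comp f g : gen X f -> gen X g -> gen X (f \o g)
| gen_inv f g : gen X f -> cancel f g -> cancel g f -> gen X g.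

Definition preceq (T : Type) (G1 G2 : set (T -> T)) : Prop :=
  exists U : set (T -> T),
    [/\ finite_set U, U `<=` Sym T & G1 `<=` gen (G2 `|` U)].

Definition approx (T : Type) (G1 G2 : set (T -> T)) : Prop :=
  preceq G1 G2 /\ preceq G2 G1.

Definition prec (T : Type) (G1 G2 : set (T -> T)) : Prop :=
  preceq G1 G2 /\ ~ preceq G2 G1.

Definition setwise_stab (T : Type) (A : set (set T)) : set (T -> T) :=
  [set f | Sym T f /\ forall Sigma, A Sigma -> f @` Sigma = Sigma].

Definition pt_stab (T : Type) (G : set (T -> T)) (Gamma : set T) : set (T -> T) :=
  [set g | G g /\ forall x, Gamma x -> g x = x].

(* Function topology on S (pointwise convergence, Omega discrete):
   basic open neighbourhoods of f in S are
   { g in S : g x = f x for all x in Gamma }, Gamma finite. *)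
Definition agree_on (T : Type) (Gamma : set T) (f g : T -> T) : Prop :=
  forall x, Gamma x -> g x = f x.

Definition closed_in_Sym (T : Type) (G : set (T -> T)) : Prop :=
  forall f, Sym T f -> ~ G f ->
    exists Gamma : set T, finite_set Gamma /\
      forall g, Sym T g -> agree_on Gamma f g -> ~ G g.

Definition discrete_in_Sym (T : Type) (G : set (T -> T)) : Prop :=
  forall g, G g -> exists Gamma : set T, finite_set Gamma /\
    forall h, G h -> agree_on Gamma g h -> h = g.

(* Galvin's theorem carries the argument: every countable subset of Sym(Omega)
   lies in a finitely generated subgroup.  Identify Omega with Z x Z x V and
   let X = {(0,0)} x V.  Every permutation factors as a g b g^-1 c nu with
   a, b, c supported on X and g, nu taken from a fixed finite set, and a
   countable family of permutations supported on X is generated by three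
   permutations that stack the family along the rows of the grid and shift
   rows and columns.  Hence any two countable subgroups are ≈, and whatever
   is ≼ a countable group is countable.  A setwise stabiliser S_(A) with
   infinitely many non-singleton blocks contains, for every set of natural
   numbers, the involution swapping a chosen pair in each of the indexed
   blocks, so it is uncountable and G ≺ S_(A).  For (i) -> (ii): if every
   finite pointwise stabiliser were nontrivial, a back-and-forth diagonal
   construction would produce a permutation in the closure of G, hence in G,
   that differs from every member of an enumeration of G. *)

From mathcomp Require Import all_boot all_algebra.
From mathcomp Require Import boolp classical_sets functions cardinality.
From mathcomp Require Import zify.

Set Implicit Arguments. Unset Strict Implicit. Unset Printing Implicit Defensive.
Import GRing.Theory.
Local Open Scope classical_set_scope.
Local Open Scope card_scope.

(** * Bijections between sets *)

Lemma fun_neq_pt T U (f g : T -> U) : f <> g -> exists x, f x <> g x.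
Proof. by move=> fg; apply: contrapT => /forallNP fgx; apply/fg/funext => x; apply: contrapT. Qed.

Lemma countable_setU T (A B : set T) :
  countable A -> countable B -> countable (A `|` B).
Proof.
move=> cA cB; have : countable (\bigcup_(b in [set: bool]) if b then A else B).
  by apply: bigcup_countable => // -[].
by apply/sub_countable/subset_card_le => x [Ax|Bx]; [exists true|exists false].
Qed.

Lemma infinite_image T U (A : set T) (f : T -> U) :
  {in A &, injective f} -> infinite_set A -> infinite_set (f @` A).
Proof. by move=> /inj_card_eq fA; rewrite (eq_finite_set fA). Qed.

Lemma card_eq_set_bij T U (A : set T) (B : set U) :
  B !=set0 -> A #= B -> exists f, set_bij A B f.
Proof.
move=> [u0 _] /card_bijP [f fbij].
by exists (valLR u0 f); apply/valLR_bijP.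
Qed.

Lemma countable_infinite_set_bij T U (A : set T) (B : set U) :
  countable A -> infinite_set A -> countable B -> infinite_set B ->
  exists f, set_bij A B f.
Proof.
move=> cA iA cB iB; apply: card_eq_set_bij; first exact: infinite_setN0.
by apply: card_eq_trans (eq_card_nat cA iA) _; rewrite card_eq_sym eq_card_nat.
Qed.

Lemma set_bij_patch T U (A1 A2 : set T) (B1 B2 : set U) f1 f2 :
  set_bij A1 B1 f1 -> set_bij A2 B2 f2 ->
  A1 `&` A2 = set0 -> B1 `&` B2 = set0 ->
  set_bij (A1 `|` A2) (B1 `|` B2) (patch f2 A1 f1).
Proof.
move=> [f1S f1I f1U] [f2S f2I f2U] A12 B12.
have p1 x : A1 x -> patch f2 A1 f1 x = f1 x by move=> ?; rewrite patchT ?inE.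
have p2 x : A2 x -> patch f2 A1 f1 x = f2 x.
  move=> A2x; rewrite patchC // inE => A1x.
  by have : (A1 `&` A2) x by []; rewrite A12.
split.
- by move=> x [Ax|Ax]; [rewrite p1 //; left; apply: f1S|rewrite p2 //; right; apply: f2S].
- move=> x y; rewrite !inE => -[Ax|Ax] [Ay|Ay].
  + by rewrite !p1 //; apply: f1I; rewrite inE.
  + rewrite p1 // p2 // => e.
    have : (B1 `&` B2) (f1 x) by split; [apply: f1S|rewrite e; apply: f2S].
    by rewrite B12.
  + rewrite p2 // p1 // => e.
    have : (B1 `&` B2) (f1 y) by split; [apply: f1S|rewrite -e; apply: f2S].
    by rewrite B12.
  + by rewrite !p2 //; apply: f2I; rewrite inE.
- move=> y [By|By].
  + by have [x Ax <-] := f1U y By; exists x; [left|rewrite p1].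
  + by have [x Ax <-] := f2U y By; exists x; [right|rewrite p2].
Qed.

Lemma bijective_patch T U (A A' : set T) (B B' : set U) f f' :
  set_bij A B f -> set_bij A' B' f' ->
  A `|` A' = setT -> A `&` A' = set0 -> B `|` B' = setT -> B `&` B' = set0 ->
  bijective (patch f' A f).
Proof.
move=> fAB fAB' AA' AA'0 BB' BB'0; rewrite -setTT_bijective -AA' -BB'.
exact: set_bij_patch.
Qed.

Lemma set_bij_id T (A : set T) : set_bij A A id.
Proof. by split=> // y Ay; exists y. Qed.

Definition perm_on T (X : set T) (a : T -> T) :=
  bijective a /\ forall x, ~ X x -> a x = x.

Lemma perm_on_inv T (X : set T) a a' :
  perm_on X a -> cancel a a' -> cancel a' a -> perm_on X a'.
Proof.
move=> [_ aX] aK aK'; split; first by exists a.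
by move=> x Xx; rewrite -{1}(aX x Xx) aK.
Qed.

Lemma perm_onS T (X : set T) a x : perm_on X a -> X x -> X (a x).
Proof.
move=> [[a' aK _] aX] Xx; apply: contrapT => Xax.
by have := aX _ Xax => /(can_inj aK) ax; apply: Xax; rewrite ax.
Qed.

Lemma perm_on_extend (T : countType) (X P S : set T) f :
  P `<=` X -> S `<=` X -> infinite_set (X `\` P) -> infinite_set (X `\` S) ->
  set_bij P S f -> exists2 a, perm_on X a & {in P, a =1 f}.
Proof.
move=> PX SX iP iS fPS.
have [k kPS] := countable_infinite_set_bij (countableP _) iP (countableP _) iS.
have partition_of (Y : set T) : Y `<=` X ->
    Y `|` ((X `\` Y) `|` ~` X) = setT /\ Y `&` ((X `\` Y) `|` ~` X) = set0.
  move=> YX; rewrite setUA setDUK // setUCr; split=> //.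
  by apply/seteqP; split=> // x [Yx [[_ /(_ Yx)]|/(_ (YX x Yx))]].
have disjC (Y : set T) : (X `\` Y) `&` ~` X = set0.
  by apply/seteqP; split=> // x [[]].
have [PU PI] := partition_of P PX; have [SU SI] := partition_of S SX.
have kX : set_bij ((X `\` P) `|` ~` X) ((X `\` S) `|` ~` X) (patch id (X `\` P) k).
  exact: set_bij_patch (set_bij_id _) (disjC _) (disjC _).
exists (patch (patch id (X `\` P) k) P f); last by move=> x xP; rewrite patchT.
split; first exact: bijective_patch fPS kX PU PI SU SI.
move=> x Xx; have nPx : x \in ~` P by rewrite inE => /PX.
have nXPx : x \in ~` (X `\` P) by rewrite inE => -[].
by rewrite patchC // patchC.
Qed.

(** * Generated subgroups *)

Definition finv {T} (f : T -> T) : T -> T :=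
  if pselect (exists g, cancel f g /\ cancel g f) is left H then sval (cid H) else f.

Lemma finvE T (f g : T -> T) : cancel f g -> cancel g f -> finv f = g.
Proof.
move=> fg gf; rewrite /finv; case: pselect => [H|]; last by case; exists g.
case: cid => g' [fg' g'f] /=; apply: funext => y.
by rewrite -{1}(gf y) fg'.
Qed.

Lemma gen_sub T (X Y : set (T -> T)) : X `<=` Y -> gen X `<=` gen Y.
Proof.
move=> XY f; elim=> [g /XY|| g h _ Hg _ Hh| g h _ Hg gh hg].
- exact: gen_base.
- exact: gen_id.
- exact: gen_comp.
- exact: gen_inv Hg gh hg.
Qed.

Lemma gen_conj T U (X : set (T -> T)) (phi : T -> U) (phi' : U -> T) w :
  cancel phi phi' -> cancel phi' phi ->
  gen X w -> gen [set phi \o u \o phi' | u in X] (phi \o w \o phi').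
Proof.
move=> pK pK'; elim=> [g Xg|| g h _ Hg _ Hh| g h _ Hg gh hg].
- by apply: gen_base; exists g.
- have -> : phi \o id \o phi' = id by apply: funext => x /=; rewrite pK'.
  exact: gen_id.
- have -> : phi \o (g \o h) \o phi' = (phi \o g \o phi') \o (phi \o h \o phi').
    by apply: funext => x /=; rewrite pK.
  exact: gen_comp.
- by apply: gen_inv Hg _ _ => x /=; rewrite pK ?gh ?hg pK'.
Qed.

Section GenCountable.
Variables (T : Type) (X : set (T -> T)).

Fixpoint gen_depth (n : nat) : set (T -> T) :=
  if n is n'.+1 then
    gen_depth n' `|` (fun p => p.1 \o p.2) @` (gen_depth n' `*` gen_depth n')
      `|` finv @` gen_depth n'
  else X `|` [set id].

Lemma gen_depth_countable n : countable X -> countable (gen_depth n).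
Proof.
move=> cX; elim: n => [|n IH] /=.
  exact/countable_setU/countable1.
apply: countable_setU; first apply: countable_setU => //.
  exact/(sub_countable (card_image_le _ _))/countableX.
exact/(sub_countable (card_image_le _ _)).
Qed.

Lemma gen_depth_mono : {homo gen_depth : n m / (n <= m)%N >-> n `<=` m}.
Proof.
move=> n; elim=> [|m IH]; first by rewrite leqn0 => /eqP ->.
rewrite leq_eqVlt ltnS => /orP[/eqP -> //|/IH nm f Gf].
by left; left; apply: nm.
Qed.

Lemma gen_depth_exhaust f : gen X f -> exists n, gen_depth n f.
Proof.
elim=> [g Xg|| g h _ [n Hg] _ [m Hh]| g h _ [n Hg] gh hg].
- by exists 0%N; left.
- by exists 0%N; right.
- exists (maxn n m).+1; left; right; exists (g, h) => //; split.
  + exact: gen_depth_mono (leq_maxl n m) _ Hg.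
  + exact: gen_depth_mono (leq_maxr n m) _ Hh.
- by exists n.+1; right; exists g => //; apply: finvE.
Qed.

Lemma gen_countable : countable X -> countable (gen X).
Proof.
move=> cX; have : countable (\bigcup_(n in [set: nat]) gen_depth n).
  by apply: bigcup_countable => // n _; apply: gen_depth_countable.
by apply/sub_countable/subset_card_le => f /gen_depth_exhaust [n Gf]; exists n.
Qed.

End GenCountable.

(** * Galvin's theorem *)

Section Cells.
Variable V : Type.
Local Open Scope ring_scope.
Local Notation W := ((int * int) * V)%type.

Definition shift (k : int) (w : W) : W := ((w.1.1 + k, w.1.2), w.2).
Definition climb (w : W) : W := if 0 <= w.1.1 then ((w.1.1, w.1.2 + 1), w.2) else w.
Definition descend (w : W) : W := if 0 <= w.1.1 then ((w.1.1, w.1.2 - 1), w.2) else w.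
Definition climb_row (i : int) (w : W) : W :=
  if w.1.1 == i then ((w.1.1, w.1.2 + 1), w.2) else w.
Definition descend_row (i : int) (w : W) : W :=
  if w.1.1 == i then ((w.1.1, w.1.2 - 1), w.2) else w.
Definition stack (F : nat -> V -> V) (w : W) : W :=
  if (0 <= w.1.1) && (0 <= w.1.2) then (w.1, F `|w.1.1|%N w.2) else w.
Definition at_origin (f : V -> V) (w : W) : W :=
  if w.1 == (0, 0) then (w.1, f w.2) else w.

Ltac case_ifs := repeat match goal with |- context [if ?c then _ else _] =>
  lazymatch c with context [if _ then _ else _] => fail
  | _ => let h := fresh "h" in case h: c => /= end end.

Lemma shiftK k : cancel (shift k) (shift (- k)).
Proof. by move=> [[m n] v]; rewrite /shift /=; congr (_, _, _); lia. Qed.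

Lemma shiftKV k : cancel (shift (- k)) (shift k).
Proof. by move=> [[m n] v]; rewrite /shift /=; congr (_, _, _); lia. Qed.

Lemma shift0 : shift 0 = id.
Proof. by apply: funext => -[[m n] v]; rewrite /shift /= addr0. Qed.

Lemma shift_add k l : shift (k + l) = shift l \o shift k.
Proof. by apply: funext => -[[m n] v]; rewrite /shift /= addrA. Qed.

Lemma climbK : cancel climb descend.
Proof. by move=> [[m n] v]; rewrite /climb /descend /=; case_ifs; congr (_, _, _); lia. Qed.

Lemma descendK : cancel descend climb.
Proof. by move=> [[m n] v]; rewrite /climb /descend /=; case_ifs; congr (_, _, _); lia. Qed.

Lemma stackK F G : (forall i, cancel (F i) (G i)) -> cancel (stack F) (stack G).
Proof. by move=> FG [[m n] v]; rewrite /stack /=; case_ifs; rewrite ?FG //; congruence. Qed.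

Lemma climb_rowK i : cancel (climb_row i) (descend_row i).
Proof. by move=> [[m n] v]; rewrite /climb_row /descend_row /=; case_ifs; congr (_, _, _); lia. Qed.

Lemma descend_rowK i : cancel (descend_row i) (climb_row i).
Proof. by move=> [[m n] v]; rewrite /climb_row /descend_row /=; case_ifs; congr (_, _, _); lia. Qed.

(* Row [i] is climbed by [climb] conjugated to rows [>= i] and descended back
   by [descend] conjugated to rows [>= i + 1]. *)
Lemma climb_rowE i :
  climb_row i = shift i \o climb \o shift (- i) \o
                shift (i + 1) \o descend \o shift (- (i + 1)).
Proof.
apply: funext => -[[m n] v]; rewrite /climb_row /shift /climb /descend /=.
by case_ifs; try (congr (_, _, _)); lia.
Qed.

(* The commutator of [stack F] with [climb_row i] is trivial everywhere except
   on the cell (i, 0), where it acts as [F i]. *)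
Lemma at_originE F G (i : nat) : (forall j, cancel (G j) (F j)) ->
  at_origin (F i) =
  shift (- i%:Z) \o stack F \o climb_row i \o stack G \o descend_row i \o shift i.
Proof.
move=> GF; apply: funext => -[[m n] v].
rewrite /at_origin /shift /stack /climb_row /descend_row /= !xpair_eqE.
case_ifs; rewrite ?GF; try (congr (_, _, _)); try lia.
by have -> : m + i%:Z = i%:Z by lia.
Qed.

Lemma at_origin_gen (F : nat -> V -> V) : (forall i, bijective (F i)) ->
  exists U : set (W -> W),
    [/\ finite_set U, U `<=` Sym W & forall i, gen U (at_origin (F i))].
Proof.
move=> Fbij; have /choice[G FG] : forall i, exists g, cancel (F i) g /\ cancel g (F i).
  by move=> i; case: (Fbij i) => g; exists g.
pose U := [set shift 1; climb; stack F]; exists U; split.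
- exact: finite_set3.
- move=> f [[->|->]|->].
  + by exists (shift (-1)); [exact: shiftK|exact: (@shiftKV 1)].
  + by exists descend; [exact: climbK|exact: descendK].
  + by exists (stack G); apply: stackK => i; case: (FG i).
have gen_shift_nat (n : nat) : gen U (shift n%:Z).
  elim: n => [|n IH]; first by rewrite shift0; exact: gen_id.
  rewrite -addn1 PoszD shift_add; apply: gen_comp IH.
  by apply: gen_base; left; left.
have gen_shift k : gen U (shift k).
  case: k => n; first exact: gen_shift_nat.
  by rewrite NegzE; exact: gen_inv (gen_shift_nat n.+1) (shiftK _) (shiftKV _).
have gen_climb : gen U climb by apply: gen_base; left; right.
have gen_descend : gen U descend by exact: gen_inv gen_climb climbK descendK.
have gen_stackF : gen U (stack F) by apply: gen_base; right.
have gen_stackG : gen U (stack G).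
  by apply: gen_inv gen_stackF _ _; apply: stackK => i; case: (FG i).
have gen_climb_row i : gen U (climb_row i).
  by rewrite climb_rowE; repeat apply: gen_comp.
have gen_descend_row i : gen U (descend_row i).
  exact: gen_inv (gen_climb_row i) (climb_rowK i) (descend_rowK i).
move=> i; rewrite (@at_originE F G) => [|j]; last by case: (FG j).
by repeat apply: gen_comp.
Qed.
End Cells.

Lemma split_infinite (T : countType) (J : set T) : infinite_set J ->
  exists2 J1, J1 `<=` J & infinite_set J1 /\ infinite_set (J `\` J1).
Proof.
move=> iJ; have [e [eJ einj _]] :=
  countable_infinite_set_bij (countableP [set: nat]) infinite_nat (countableP J) iJ.
have e_inj : {in [set: nat] &, injective e} := einj.
have infinite_e (f : nat -> nat) : injective f -> infinite_set (e @` range f).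
  move=> fi; apply: infinite_image; first by move=> x y _ _; apply: e_inj; rewrite in_setT.
  by apply: infinite_image infinite_nat => x y _ _; apply: fi.
exists (e @` range double); first by move=> _ [n _ <-]; apply: eJ.
split; first by apply: infinite_e => m n; lia.
apply: sub_infinite_set (infinite_e (fun n => n.*2.+1) _) => [_ [n [k _ <-] <-]|m n]; last lia.
split; first exact: eJ.
by move=> [_ [j _ <-] /e_inj]; rewrite !in_setT => /(_ isT isT); lia.
Qed.

Section MoietyFactor.
Variables (T : countType) (X P : set T) (g g' : T -> T).
Hypotheses (PX : P `<=` X) (iP : infinite_set P) (iXP : infinite_set (X `\` P)).
Hypotheses (gK : cancel g g') (gK' : cancel g' g) (gP : forall x, ~ X x -> P (g x)).

(* [c] maps an infinite part [J1] of [X `&` pi @^-1` X] back to [P] and [a]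
   sends [P] to [pi @` J1], so that [a^-1 \o pi \o c^-1] fixes [P] pointwise;
   conjugating by [g] turns it into a permutation fixing [~` X]. *)
Lemma moiety_factor pi pi' : cancel pi pi' -> cancel pi' pi ->
  infinite_set (X `&` pi @^-1` X) ->
  exists a b c, [/\ perm_on X a, perm_on X b, perm_on X c &
                    pi = a \o g \o b \o g' \o c].
Proof.
move=> piK piK' /split_infinite [J1 J1J [iJ1 iJJ1]].
have J1X x : J1 x -> X x by move=> /J1J [].
have piJ1X : pi @` J1 `<=` X by move=> _ [x /J1J [_ ?] <-].
have pi_inj : {in J1 &, injective pi} by move=> x y _ _ /(can_inj piK).
have iXJ1 : infinite_set (X `\` J1).
  by apply: sub_infinite_set iJJ1 => x [[Xx _] nJ1x].
have iXpiJ1 : infinite_set (X `\` pi @` J1).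
  have : infinite_set (pi @` (X `&` pi @^-1` X `\` J1)).
    by apply: infinite_image iJJ1 => x y _ _ /(can_inj piK).
  apply: sub_infinite_set => _ [x [[Xx Xpix] nJ1x] <-]; split=> //.
  by move=> [y J1y /(can_inj piK) yx]; apply: nJ1x; rewrite -yx.
have [h hPJ1] := countable_infinite_set_bij (countableP P) iP (countableP J1) iJ1.
have [ci ciX ciE] := perm_on_extend PX J1X iXP iXJ1 hPJ1.
have [a aX aE] := perm_on_extend PX piJ1X iXP iXpiJ1
  (set_bij_comp hPJ1 (inj_bij pi_inj)).
have [[a' aK aK'] _] := aX; have [[c ciK' ciK] _] := ciX.
have fixP x : P x -> a' (pi (ci x)) = x.
  by move=> /mem_set Px; rewrite ciE // -[pi (h x)]/((pi \o h) x) -aE // aK.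
exists a, (g' \o (a' \o pi \o ci) \o g), c; split=> //.
- split.
    apply: bij_comp; last by exists g'.
    apply: bij_comp; first by exists g.
    by apply: bij_comp; [apply: bij_comp; [exists a|exists pi']|exists c].
  by move=> x nXx /=; rewrite fixP ?gK //; apply: gP.
- exact: perm_on_inv ciX ciK' ciK.
- by apply: funext => x /=; rewrite !gK' ciK aK'.
Qed.

End MoietyFactor.

Lemma infinite_meet_preimage_comp T (X : set T) (pi pi' t t' : T -> T) :
  cancel pi pi' -> cancel pi' pi -> cancel t' t ->
  (forall x, ~ X x -> X (t' x)) -> infinite_set X ->
  finite_set (X `&` pi @^-1` X) -> infinite_set (X `&` (pi \o t) @^-1` X).
Proof.
move=> piK piK' tK' t'X iX fin.
have iS : infinite_set (~` X `&` pi @^-1` X).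
  have : infinite_set (pi' @` X) by apply: infinite_image iX => x y _ _ /(can_inj piK').
  move=> ipre fS; apply: ipre.
  have : finite_set ((X `&` pi @^-1` X) `|` (~` X `&` pi @^-1` X)) by rewrite finite_setU.
  apply: sub_finite_set => _ [x Xx <-].
  by have [?|?] := pselect (X (pi' x)); [left|right]; rewrite /= piK'.
have : infinite_set (t' @` (~` X `&` pi @^-1` X)).
  by apply: infinite_image iS => x y _ _ /(can_inj tK').
by apply: sub_infinite_set => _ [x [nXx Xpix] <-]; split; rewrite /= ?tK' //; apply: t'X.
Qed.

Lemma moiety_decomposition (T : countType) (X : set T) :
  infinite_set X -> infinite_set (~` X) ->
  exists g g' t t' : T -> T,
    [/\ cancel g g', cancel g' g, cancel t t', cancel t' t &
    forall pi pi', cancel pi pi' -> cancel pi' pi -> exists a b c nu,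
      [/\ perm_on X a, perm_on X b, perm_on X c, nu = id \/ nu = t' &
          pi = a \o g \o b \o g' \o c \o nu]].
Proof.
move=> iX iCX; have [P PX [iP iXP]] := split_infinite iX.
have set_bij_ex (A B : set T) : infinite_set A -> infinite_set B -> exists f, set_bij A B f.
  by move=> iA iB; apply: countable_infinite_set_bij => //; apply: countableP.
have [f1 f1X] := set_bij_ex _ _ iX iCX; have [f2 f2CX] := set_bij_ex _ _ iCX iX.
have [t' tK tK'] : bijective (patch f2 X f1).
  by apply: bijective_patch f1X f2CX _ _ _ _; rewrite ?setUCr ?setICr ?setUCl ?setICl.
have t'X x : ~ X x -> X (t' x).
  move=> nXx; apply: contrapT => nXt'x; apply: nXx; rewrite -[x]tK' patchC ?inE //.
  by case: f2CX => + _ _; apply.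
have [k1 k1X] : exists k, set_bij X ((X `\` P) `|` ~` X) k.
  by apply: set_bij_ex => //; apply: sub_infinite_set iCX => x; right.
have [k2 k2CX] := set_bij_ex _ _ iCX iP.
have [g' gK gK'] : bijective (patch k2 X k1).
  apply: bijective_patch k1X k2CX _ _ _ _; rewrite ?setUCr ?setICr //.
    by rewrite setUAC [_ `|` P]setUC setDUK // setUCr.
  by apply/seteqP; split=> // x [[[_ /[apply]]|/[swap] /PX]].
have gP x : ~ X x -> P (patch k2 X k1 x).
  by move=> nXx; rewrite patchC ?inE //; case: k2CX => + _ _; apply.
exists (patch k2 X k1), g', (patch f2 X f1), t'; split=> // pi pi' piK piK'.
have [fin|inf] := pselect (finite_set (X `&` pi @^-1` X)); last first.
  have [a [b [c [aX bX cX ->]]]] := moiety_factor PX iP iXP gK gK' gP piK piK' inf.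
  by exists a, b, c, id; split=> //; left.
have piK2 : cancel (pi \o patch f2 X f1) (t' \o pi') by move=> x /=; rewrite piK tK.
have piK2' : cancel (t' \o pi') (pi \o patch f2 X f1) by move=> x /=; rewrite tK' piK'.
have [a [b [c [aX bX cX e]]]] := moiety_factor PX iP iXP gK gK' gP piK2 piK2'
  (infinite_meet_preimage_comp piK piK' tK' t'X iX fin).
exists a, b, c, t'; split=> //; first by right.
by rewrite -e; apply: funext => x /=; rewrite tK'.
Qed.

Lemma countable_enum T (C : set T) (P : T -> Prop) x0 :
  countable C -> (forall x, C x -> P x) -> P x0 ->
  exists e : nat -> T, (forall n, P (e n)) /\ C `<=` range e.
Proof.
move=> /countable_injP [iota iota_inj] CP Px0.
pose e n := if pselect (exists2 x, C x & iota x = n) is left H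
            then s2val (cid2 H) else x0.
exists e; split=> [n|x Cx].
  by rewrite /e; case: pselect => // H; apply/CP/(s2valP (cid2 H)).
exists (iota x) => //; rewrite /e; case: pselect => [H|]; last by case; exists x.
apply: iota_inj; rewrite ?inE; [exact: (s2valP (cid2 H))|exact: Cx|].
exact: (s2valP' (cid2 H)).
Qed.

Section GalvinCells.
Variable V : countType.
Hypothesis infV : infinite_set [set: V].
Local Open Scope ring_scope.
Local Notation W := ((int * int) * V)%type.

Definition origin : set W := [set w | w.1 = (0, 0)].

Lemma perm_on_origin a : perm_on origin a -> exists2 f, bijective f & a = at_origin f.
Proof.
have originE b v : perm_on origin b -> b ((0, 0), v) = ((0, 0), (b ((0, 0), v)).2).
  move=> bO; have : origin (b ((0, 0), v)) by apply: perm_onS bO _.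
  by case: (b _) => p u; rewrite /origin /= => ->.
move=> aO; have [[a' aK aK'] aX] := aO; have a'O := perm_on_inv aO aK aK'.
exists (fun v => (a ((0, 0), v)).2).
  by exists (fun v => (a' ((0, 0), v)).2) => v; rewrite -originE // ?aK ?aK'.
apply: funext => -[[m n] v]; rewrite /at_origin /=.
case: eqP => [->|mn]; first exact: originE.
by apply: aX => e; apply: mn.
Qed.

Lemma infinite_origin : infinite_set origin.
Proof.
have : infinite_set ((fun v : V => (((0, 0) : int * int), v)) @` setT).
  by apply: infinite_image infV => x y _ _ [].
by apply: sub_infinite_set => _ [v _ <-].
Qed.

Lemma infinite_origin_compl : infinite_set (~` origin).
Proof.
have : infinite_set ((fun v : V => (((1, 0) : int * int), v)) @` setT).
  by apply: infinite_image infV => x y _ _ [].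
by apply: sub_infinite_set => _ [v _ <-] [].
Qed.

Lemma galvin_cells (C : set (W -> W)) : countable C -> C `<=` Sym W ->
  exists U, [/\ finite_set U, U `<=` Sym W & C `<=` gen U].
Proof.
move=> cC CS.
have [g [g' [t [t' [gK gK' tK tK' decomp]]]]] :=
  moiety_decomposition infinite_origin infinite_origin_compl.
have [e [e_bij Ce]] : exists e : nat -> W -> W, (forall n, bijective (e n)) /\ C `<=` range e.
  by apply: countable_enum cC CS _; exists id.
have /choice [Q HQ] : forall n, exists q : (V -> V) * (V -> V) * (V -> V) * (W -> W),
    [/\ bijective q.1.1.1, bijective q.1.1.2, bijective q.1.2, q.2 = id \/ q.2 = t' &
        e n = at_origin q.1.1.1 \o g \o at_origin q.1.1.2 \o g' \o at_origin q.1.2 \o q.2].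
  move=> n; have [e' eK eK'] := e_bij n.
  have [a [b [c [nu [/perm_on_origin [fa fa_bij ->] /perm_on_origin [fb fb_bij ->]
    /perm_on_origin [fc fc_bij ->] nuE ->]]]]] := decomp _ _ eK eK'.
  by exists (fa, fb, fc, nu).
have [bij1 bij2 bij3] : [/\ forall n, bijective (Q n).1.1.1,
    forall n, bijective (Q n).1.1.2 & forall n, bijective (Q n).1.2].
  by split=> n; case: (HQ n).
have [U1 [fU1 U1S genU1]] := at_origin_gen bij1.
have [U2 [fU2 U2S genU2]] := at_origin_gen bij2.
have [U3 [fU3 U3S genU3]] := at_origin_gen bij3.
pose U := U1 `|` U2 `|` U3 `|` [set g; t].
exists U; split.
- by rewrite !finite_setU; split; [split; [split|]|split; exact: finite_set1].
- by move=> f [[[/U1S|/U2S]|/U3S]|[->|->]] //; [exists g'|exists t'].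
move=> _ /Ce [n _ <-]; have [_ _ _ nuE ->] := HQ n.
have genU (Ui : set (W -> W)) f : Ui `<=` U -> gen Ui f -> gen U f.
  by move=> UiU; apply: gen_sub.
have gen_g : gen U g by apply: gen_base; right; left.
have gen_nu : gen U (Q n).2.
  case: nuE => ->; first exact: gen_id.
  by apply: gen_inv tK tK'; apply: gen_base; right; right.
have gen_a : gen U (at_origin (Q n).1.1.1) by apply: genU (genU1 n) => f ?; do 3 left.
have gen_b : gen U (at_origin (Q n).1.1.2) by apply: genU (genU2 n) => f ?; do 2 left; right.
have gen_c : gen U (at_origin (Q n).1.2) by apply: genU (genU3 n) => f ?; left; right.
have gen_g' : gen U g' by exact: gen_inv gen_g gK gK'.
exact: gen_comp (gen_comp (gen_comp (gen_comp (gen_comp gen_a gen_g) gen_b) gen_g')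
  gen_c) gen_nu.
Qed.

End GalvinCells.

Theorem galvin (T : countType) : infinite_set [set: T] ->
  forall C : set (T -> T), countable C -> C `<=` Sym T ->
  exists U, [/\ finite_set U, U `<=` Sym T & C `<=` gen U].
Proof.
move=> iT C cC CS.
have iW : infinite_set [set: (int * int) * T].
  by apply: sub_infinite_set (infinite_origin iT) => ? _.
have [phi] : exists phi : T -> (int * int) * T, set_bij setT setT phi.
  exact: countable_infinite_set_bij (countableP _) iT (countableP _) iW.
rewrite setTT_bijective => -[phi' phiK phiK'].
have conj_Sym (f : T -> T) : Sym T f -> Sym _ (phi \o f \o phi').
  by move=> [f' fK fK']; exists (phi \o f' \o phi') => x /=; rewrite ?phiK ?fK ?phiK' ?fK'.
have conjC_Sym : [set phi \o f \o phi' | f in C] `<=` Sym _.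
  by move=> _ [f Cf <-]; apply/conj_Sym/CS.
have [U [fU US CU]] := galvin_cells iT (sub_countable (card_image_le _ _) cC) conjC_Sym.
exists [set phi' \o u \o phi | u in U]; split; first exact: finite_image.
  move=> _ [u Uu <-]; have [u' uK uK'] := US u Uu.
  by exists (phi' \o u' \o phi) => x /=; rewrite ?phiK' ?uK ?phiK ?uK'.
move=> f Cf; have := gen_conj phiK' phiK (CU _ (ex_intro2 _ _ f Cf erefl)).
by congr gen; apply: funext => x /=; rewrite !phiK.
Qed.

(** * Setwise stabilisers *)

Lemma set_nat_uncountable : ~ countable [set: set nat].
Proof.
move=> /countable_injP [iota iota_inj].
pose D := [set n | exists2 S, iota S = n & ~ S n].
have DE S : iota S = iota D -> S = D by move/iota_inj; apply; rewrite in_setT.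
have nD : ~ D (iota D) by move=> Did; case: (Did) => S /DE ->; apply.
by apply: (nD); exists D.
Qed.

Lemma not_card_le1 T (S : set T) : ~ (S #<= `I_1) -> exists x y, [/\ S x, S y & x <> y].
Proof.
move=> S1; apply: contrapT => /forallNP S_sub; apply: S1.
apply/pcard_leP/injfunPex; exists (fun _ => 0%N) => [x _|x y /set_mem Sx /set_mem Sy _] //.
by apply: contrapT => xy; apply: (S_sub x); exists y.
Qed.

Section SwapPairs.
Variables (T : Type) (p q : nat -> T).
Definition in_pair k x := x = p k \/ x = q k.
Hypotheses (p_neq_q : forall k, p k <> q k)
  (in_pair_uniq : forall k k' x, in_pair k x -> in_pair k' x -> k = k').

Definition swap_pairs (S : set nat) (x : T) : T :=
  if pselect (exists2 k, S k & in_pair k x) is left H then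
    let k := s2val (cid2 H) in if pselect (x = p k) then q k else p k
  else x.

Lemma swap_pairsE S k x : S k -> in_pair k x ->
  swap_pairs S x = if pselect (x = p k) then q k else p k.
Proof.
move=> Sk kx; rewrite /swap_pairs; case: pselect => [H|]; last by case; exists k.
by case: cid2 => k' _ k'x /=; rewrite (in_pair_uniq k'x kx).
Qed.

Lemma swap_pairs_p S k : S k -> swap_pairs S (p k) = q k.
Proof. by move=> Sk; rewrite (swap_pairsE Sk) /in_pair; [case: pselect|left]. Qed.

Lemma swap_pairs_q S k : S k -> swap_pairs S (q k) = p k.
Proof.
move=> Sk; rewrite (swap_pairsE Sk) /in_pair; last by right.
by case: pselect => // /esym /p_neq_q.
Qed.

Lemma swap_pairs_out S x : ~ (exists2 k, S k & in_pair k x) -> swap_pairs S x = x.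
Proof. by rewrite /swap_pairs; case: pselect. Qed.

Lemma swap_pairsK S : involutive (swap_pairs S).
Proof.
move=> x; have [[k Sk [->|->]]|nx] := pselect (exists2 k, S k & in_pair k x).
- by rewrite swap_pairs_p // swap_pairs_q.
- by rewrite swap_pairs_q // swap_pairs_p.
- by rewrite !swap_pairs_out.
Qed.

Lemma swap_pairs_inj : injective swap_pairs.
Proof.
move=> S S' SS'; apply/funext => k; apply/propext.
wlog suff : S S' SS' / S k -> S' k by move=> h; split; apply: h.
move=> Sk; apply: contrapT => nS'k.
have := congr1 (@^~ (p k)) SS'; rewrite /= swap_pairs_p // swap_pairs_out.
  by move/esym; apply: p_neq_q.
by move=> [k' S'k' /(in_pair_uniq (or_introl erefl)) kk']; apply: nS'k; rewrite kk'.
Qed.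

Lemma swap_pairs_stab (A : set (set T)) S :
  (forall k Sigma x, A Sigma -> Sigma x -> in_pair k x -> Sigma (p k) /\ Sigma (q k)) ->
  setwise_stab A (swap_pairs S).
Proof.
move=> blockA; split; first by exists (swap_pairs S); apply: swap_pairsK.
move=> Sigma ASigma.
have swapS x : Sigma x -> Sigma (swap_pairs S x).
  move=> Sx; have [[k Sk kx]|nx] := pselect (exists2 k, S k & in_pair k x).
    have [Sp Sq] := blockA k Sigma x ASigma Sx kx.
    by case: kx => ->; rewrite ?swap_pairs_p ?swap_pairs_q.
  by rewrite swap_pairs_out.
apply/seteqP; split=> [_ [x Sx <-]|y Sy]; first exact: swapS.
by exists (swap_pairs S y); [apply: swapS|apply: swap_pairsK].
Qed.

End SwapPairs.

Lemma partition_pairs T (A : set (set T)) :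
  partition A id [set: T] ->
  infinite_set [set Sigma | A Sigma /\ ~ (Sigma #<= `I_1)] ->
  exists p q : nat -> T,
    [/\ forall k, p k <> q k,
        forall k k' x, in_pair p q k x -> in_pair p q k' x -> k = k' &
        forall k Sigma x, A Sigma -> Sigma x -> in_pair p q k x ->
          Sigma (p k) /\ Sigma (q k)].
Proof.
move=> [_ trivA _] /infiniteP /pcard_leP /injfunPex [b bB b_inj].
have bA k : A (b k) by case: (bB k I).
have /choice [pq Hpq] k : exists pq : T * T, [/\ b k pq.1, b k pq.2 & pq.1 <> pq.2].
  by have [_ /not_card_le1 [x [y [? ? ?]]]] := bB k I; exists (x, y).
exists (fun k => (pq k).1), (fun k => (pq k).2).
have in_pair_b k x : in_pair (fun k => (pq k).1) (fun k => (pq k).2) k x -> b k x.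
  by case: (Hpq k) => ? ? _ [->|->].
split=> [k|k k' x kx k'x|k Sigma x ASigma Sx kx]; first by case: (Hpq k).
  apply: b_inj; rewrite ?in_setT //; apply: trivA => //.
  by exists x; split; apply: in_pair_b.
have -> : Sigma = b k by apply: trivA => //; exists x; split=> //; apply: in_pair_b.
by case: (Hpq k).
Qed.

Lemma setwise_stab_uncountable (T : Type) (A : set (set T)) :
  partition A id [set: T] ->
  infinite_set [set Sigma | A Sigma /\ ~ (Sigma #<= `I_1)] ->
  ~ countable (setwise_stab A).
Proof.
move=> pA /(partition_pairs pA) [p [q [p_neq_q in_pair_uniq blockA]]] cS.
apply: set_nat_uncountable.
have : countable (swap_pairs p q @` [set: set nat]).
  by apply/(sub_countable _ cS)/subset_card_le => _ [S _ <-]; apply: swap_pairs_stab.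
by rewrite (eq_countable (inj_card_eq _)) // => S S' _ _; apply: swap_pairs_inj.
Qed.

(** * Countable closed subgroups *)

Section Subgroup.
Variables (T : Type) (G : set (T -> T)).
Hypothesis sG : subgroup G.

Lemma subgroup_Sym : G `<=` Sym T. Proof. by case: sG. Qed.
Lemma subgroup_id : G id. Proof. by case: sG. Qed.
Lemma subgroup_comp f g : G f -> G g -> G (f \o g). Proof. by case: sG => _ _ + _; apply. Qed.

Lemma subgroup_finv f : G f -> [/\ G (finv f), cancel f (finv f) & cancel (finv f) f].
Proof. by case: sG => _ _ _ /[apply] -[g [Gg fg gf]]; rewrite (finvE fg gf). Qed.

Lemma trivial_stab_agree (Gamma : set T) : pt_stab G Gamma = [set id] ->
  forall g h, G g -> G h -> agree_on Gamma g h -> h = g.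
Proof.
move=> stab1 g h Gg Gh gh; have [Gg' gK gK'] := subgroup_finv Gg.
have : pt_stab G Gamma (finv g \o h).
  by split=> [|x Gx /=]; [exact: subgroup_comp|rewrite gh // gK].
rewrite stab1 => /= g'h; apply: funext => x.
by rewrite -[h x]gK' -[finv g (h x)]/((finv g \o h) x) g'h.
Qed.

Lemma trivial_stab_discreteP :
  (exists Gamma : set T, finite_set Gamma /\ pt_stab G Gamma = [set id]) <->
  discrete_in_Sym G.
Proof.
split=> [[Gamma [fGamma stab1]] g Gg|/(_ _ subgroup_id) [Gamma [fGamma Gid]]].
  by exists Gamma; split=> // h Gh; apply: trivial_stab_agree.
exists Gamma; split=> //; apply/seteqP; split=> [h [Gh hid]|_ ->].
  by apply: Gid => // x /hid.
by split; [exact: subgroup_id|].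
Qed.

End Subgroup.

Lemma trivial_stab_countable_closed (T : countType) (G : set (T -> T)) :
  subgroup G -> (exists Gamma : set T, finite_set Gamma /\ pt_stab G Gamma = [set id]) ->
  countable G /\ closed_in_Sym G.
Proof.
move=> sG [Gamma [/finite_seqP [s ->] stab1]]; split.
  apply/countable_injP; exists (fun g => pickle (map g s)).
  move=> g h /set_mem Gg /set_mem Gh /(pcan_inj pickleK) gh.
  apply/esym/(trivial_stab_agree sG stab1) => // x xs.
  by have := congr1 (nth x ^~ (index x s)) gh; rewrite !(nth_map x) ?index_mem // nth_index.
move=> f Sf nGf.
have [[g [Gg fg]]|nfg] := pselect (exists g, G g /\ agree_on [set` s] f g); last first.
  by exists [set` s]; split=> // g _ fg Gg; apply: nfg; exists g.
have [z gz] : exists z, g z <> f z.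
  apply: contrapT => /forallNP gf; apply: nGf.
  by have -> : f = g by apply: funext => z; apply: contrapT => /nesym /gf.
exists ([set` s] `|` [set z]); split; first by rewrite finite_setU; split=> //; apply: finite_set1.
move=> h _ fh Gh; apply: gz; rewrite -(fh z (or_intror erefl)).
suff -> : h = g by [].
by apply: (trivial_stab_agree sG stab1) => // x xs; rewrite (fh x (or_introl xs)) fg.
Qed.

Lemma nontrivial_stab_next (T : eqType) (G : set (T -> T)) : subgroup G ->
  (forall s : seq T, exists2 k, G k & {in s, k =1 id} /\ k <> id) ->
  exists next : (T -> T) -> seq T -> (T -> T) -> (T -> T) * T,
    forall h s g, G h -> [/\ G (next h s g).1, {in s, (next h s g).1 =1 h} &
                             (next h s g).1 (next h s g).2 <> g (next h s g).2].
Proof.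
move=> sG nontriv.
have [k0 _ [_ k0_id]] := nontriv [::]; have [t0 _] := fun_neq_pt k0_id.
have /choice [next nextP] : forall hsg : (T -> T) * seq T * (T -> T),
    exists hz : (T -> T) * T, G hsg.1.1 ->
      [/\ G hz.1, {in hsg.1.2, hz.1 =1 hsg.1.1} & hz.1 hz.2 <> hsg.2 hz.2].
  move=> [[h s] g]; have [Gh|nGh] := pselect (G h); last by exists (h, t0).
  have [<-|hg] := pselect (h = g); last first.
    by have [z hgz] := fun_neq_pt hg; exists (h, z).
  have [k Gk [ks kid]] := nontriv s; have [z kz] := fun_neq_pt kid.
  have [h' hK _] := subgroup_Sym sG Gh.
  exists (h \o k, z) => _; split=> /=; first exact: subgroup_comp.
    by move=> x /ks ->.
  by move/(can_inj hK).
by exists (fun h s g => next (h, s, g)) => h s g; apply: (nextP (h, s, g)).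
Qed.

Section Diagonal.
Variables (T : countType) (G : set (T -> T)) (en : nat -> T -> T).
Variable next : (T -> T) -> seq T -> (T -> T) -> (T -> T) * T.
Hypothesis sG : subgroup G.
Hypothesis nextP : forall h s g, G h ->
  [/\ G (next h s g).1, {in s, (next h s g).1 =1 h} &
      (next h s g).1 (next h s g).2 <> g (next h s g).2].

(* Stage [n.+1] agrees with stage [n] on the points and preimages already
   fixed, differs from [en n] at a new recorded point, and records the
   point with code [n]; the limit is a permutation different from every [en n]. *)
Fixpoint diag_seq n : (T -> T) * seq T :=
  if n is n'.+1 then
    let h := (diag_seq n').1 in
    let D := (diag_seq n').2 ++ map (finv h) (diag_seq n').2 in
    let hz := next h D (en n') in
    (hz.1, hz.2 :: (if unpickle n' is Some x then x :: D else D))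
  else (id, [::]).

Local Notation hh n := (diag_seq n).1.
Local Notation ss n := (diag_seq n).2.
Local Notation dom n := (ss n ++ map (finv (hh n)) (ss n)).

Lemma diag_seq_G n : G (hh n).
Proof.
elim: n => [|n IH]; first exact: (subgroup_id sG).
by case: (nextP (dom n) (en n) IH).
Qed.

Lemma diag_seq_dom n : {subset dom n <= ss n.+1}.
Proof. by move=> x xD /=; case: unpickle => [y|]; rewrite !inE xD ?orbT. Qed.

Lemma diag_seq_stepE n : {in dom n, hh n.+1 =1 hh n}.
Proof. by case: (nextP (dom n) (en n) (diag_seq_G n)). Qed.

Lemma diag_seq_sub n m : (n <= m)%N -> {subset ss n <= ss m}.
Proof.
move=> /subnKC <-; elim: (m - n)%N => [|k IH] x xn; first by rewrite addn0.
by rewrite addnS; apply/diag_seq_dom; rewrite mem_cat IH.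
Qed.

Lemma diag_seq_stable n m : (n <= m)%N -> {in ss n, hh m =1 hh n}.
Proof.
move=> /subnKC <-; elim: (m - n)%N => [|k IH] x xn; first by rewrite addn0.
by rewrite addnS diag_seq_stepE ?IH // mem_cat (diag_seq_sub (leq_addr k n) xn).
Qed.

Lemma diag_seq_pickle x : x \in ss (pickle x).+1.
Proof. by rewrite /= pickleK !inE eqxx orbT. Qed.

Lemma diag_seq_cover (s : seq T) : exists n, {subset s <= ss n}.
Proof.
elim: s => [|x s [n sn]]; first by exists 0%N.
exists (maxn n (pickle x).+1) => y; rewrite inE => /orP[/eqP ->|ys].
  exact: diag_seq_sub (leq_maxr _ _) _ (diag_seq_pickle x).
exact: diag_seq_sub (leq_maxl _ _) _ (sn y ys).
Qed.

Definition diag x := hh (pickle x).+1 x.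

Lemma diagE n x : x \in ss n -> diag x = hh n x.
Proof.
move=> xn; rewrite /diag -(diag_seq_stable (leq_maxr n (pickle x).+1) (diag_seq_pickle x)).
exact: diag_seq_stable (leq_maxl _ _) _ xn.
Qed.

Lemma diag_bij : bijective diag.
Proof.
rewrite -setTT_bijective; split=> // [x y _ _|y _].
  have [n sub] := diag_seq_cover [:: x; y].
  have [[h' hK _] _] := (subgroup_Sym sG (diag_seq_G n), sG).
  by rewrite !(diagE (n := n)) ?sub ?inE ?eqxx ?orbT // => /(can_inj hK).
set n := (pickle y).+1; have [_ _ hK'] := subgroup_finv sG (diag_seq_G n).
exists (finv (hh n) y) => //.
have y'D : finv (hh n) y \in dom n.
  by rewrite mem_cat map_f ?orbT ?diag_seq_pickle.
by rewrite (diagE (diag_seq_dom y'D)) diag_seq_stepE.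
Qed.

Lemma diag_seq_neq n : exists2 z, z \in ss n.+1 & hh n.+1 z <> en n z.
Proof.
exists (next (hh n) (dom n) (en n)).2; first by rewrite /= inE eqxx.
by case: (nextP (dom n) (en n) (diag_seq_G n)).
Qed.

Lemma diag_neq n : diag <> en n.
Proof. by have [z zn] := diag_seq_neq n; rewrite -(diagE zn) => + diag_ge; rewrite diag_ge. Qed.

Lemma diag_G : closed_in_Sym G -> G diag.
Proof.
move=> clG; apply: contrapT => /(clG _ diag_bij) [Gamma [/finite_seqP [s ->] notG]].
have [n sub] := diag_seq_cover s.
apply: (notG (hh n)); first exact: subgroup_Sym sG _ (diag_seq_G n).
  by move=> x /= xs; rewrite (diagE (sub x xs)).
exact: diag_seq_G.
Qed.

End Diagonal.

Lemma countable_closed_trivial_stab (T : countType) (G : set (T -> T)) :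
  subgroup G -> countable G -> closed_in_Sym G ->
  exists Gamma : set T, finite_set Gamma /\ pt_stab G Gamma = [set id].
Proof.
move=> sG cG clG; apply: contrapT => /forallNP no_stab.
have nontriv (s : seq T) : exists2 k, G k & {in s, k =1 id} /\ k <> id.
  apply: contrapT => none; apply: (no_stab [set` s]); split=> //.
  apply/seteqP; split=> [k [Gk ks]|_ ->]; last by split; [exact: subgroup_id sG|].
  by apply: contrapT => kid; apply: none; exists k => //; split=> // x /ks.
have [next nextP] := nontrivial_stab_next sG nontriv.
have [en [_ Gen]] := countable_enum cG (fun f Gf => Gf) (subgroup_id sG).
have [n _ en_diag] := Gen _ (diag_G en sG nextP clG).
exact: (diag_neq (en := en) sG nextP (esym en_diag)).
Qed.

Lemma countable_preceq (T : countType) (G H : set (T -> T)) :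
  infinite_set [set: T] -> subgroup G -> countable G -> preceq G H.
Proof.
move=> iT sG cG; have [U [fU US GU]] := galvin iT cG (subgroup_Sym sG).
by exists U; split=> // f /GU; apply: gen_sub => g Ug; right.
Qed.

Lemma preceq_countable T (G H : set (T -> T)) :
  countable G -> preceq H G -> countable H.
Proof.
move=> cG [U [fU _ HU]]; apply: sub_countable (subset_card_le HU) _.
exact/gen_countable/countable_setU/finite_set_countable.
Qed.

Unset Implicit Arguments.

Theorem theorem8p1 (T : Type) (countT : countable [set: T])
    (infT : infinite_set [set: T]) :
  (* the countable subgroups form an equivalence class under ≈ *)
  ((forall G H : set (T -> T), subgroup G -> subgroup H ->
      countable G -> countable H -> approx G H) /\
   (forall G H : set (T -> T), subgroup G -> subgroup H ->
      countable G -> approx G H -> countable H)) /\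
  (* G ≺ S_(A) for suitable partitions A *)
  (forall (G : set (T -> T)) (A : set (set T)),
      subgroup G -> countable G ->
      partition A id [set: T] ->
      (exists n : nat, forall Sigma, A Sigma -> Sigma #<= `I_n) ->
      infinite_set [set Sigma | A Sigma /\ ~ (Sigma #<= `I_1)] ->
      prec G (setwise_stab A)) /\
  (* (i) <-> (ii) <-> (iii) *)
  (forall G : set (T -> T), subgroup G ->
     ((countable G /\ closed_in_Sym G) <->
        (exists Gamma : set T, finite_set Gamma /\ pt_stab G Gamma = [set id])) /\
     ((exists Gamma : set T, finite_set Gamma /\ pt_stab G Gamma = [set id]) <->
        discrete_in_Sym G)).
Proof.
case: (Pcountable countT) => {}T ->{countT} in infT *.
split; [split|split].
- by move=> G H sG sH cG cH; split; apply: countable_preceq.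
- by move=> G H _ _ cG [_ HG]; apply: preceq_countable HG.
-
  move=> G A sG cG pA _ iA; split; first exact: countable_preceq.
  by move/(preceq_countable cG); apply: setwise_stab_uncountable.
- move=> G sG; split; last exact: trivial_stab_discreteP.
  split; first by move=> [cG clG]; apply: countable_closed_trivial_stab.
  exact: trivial_stab_countable_closed.
Qed.
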